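(* For $n\ge2$ and $k_1,\dots,k_n\in\mathbb Z\setminus\{0\}$ with $k=\sum_{j=1}^nk_j\neq0$, let $H_n=k^3-\sum_{j=1}^nk_j^3$, $k_{\max}=\max_j|k_j|$, and let $k_{\max_j}$ be the $j$-th largest element of $\{|k_1|,\dots,|k_n|\}$. There is a constant $c>0$ depending only on $n$ such that: (1) If $n=2$: $|H_2|\ge c\,k_{\max}^2$. (2) If $n=3$: at least one of the following holds: (A) $|H_3|\ge c\,k_{\max}^2$; (B) $k_{j_0}=k$ for some $j_0\in\{1,2,3\}$; (C) $|k_j|\ge c|k|$ for all $j\in\{1,2,3\}$. (3) If $n\ge4$: at least one of the following holds: (A) $|H_n|\ge c\,k_{\max}^2$; (B) $k=k_{j_0}$ for some $j_0\in\{1,\dots,n\}$; (C) $k_{\max_3}\ge c|k|$; (D) $k_{\max_3}^2k_{\max_4}\ge c\,k_{\max}^2$. *)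

From HB Require Import structures.
From mathcomp Require Import all_boot all_order all_algebra.
From mathcomp Require Import reals.
Set Implicit Arguments. Unset Strict Implicit. Unset Printing Implicit Defensive.
Import Order.TTheory GRing.Theory Num.Theory.
Local Open Scope ring_scope.

Definition ksum (n : nat) (k : 'I_n -> int) : int := \sum_(j < n) k j.

Definition Hn (n : nat) (k : 'I_n -> int) : int :=
  ksum k ^+ 3 - \sum_(j < n) k j ^+ 3.

Definition kmax (n : nat) (k : 'I_n -> int) : nat := (\max_(j < n) absz (k j))%N.

(* k_{max_m} (1-indexed, m >= 1): the m-th largest entry of the list
   |k_1|, ..., |k_n|, counted with multiplicity (decreasing rearrangement). *)
Definition kmaxj (n : nat) (k : 'I_n -> int) (m : nat) : nat :=
  nth 0%N (sort geq [seq absz (k j) | j <- enum 'I_n]) m.-1.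

From HB Require Import structures.
From mathcomp Require Import all_boot all_order all_algebra.
From mathcomp Require Import reals ring lra zify.
Import Order.TTheory GRing.Theory Num.Theory.
Set Implicit Arguments. Unset Strict Implicit. Unset Printing Implicit Defensive.
Local Open Scope ring_scope.

(* Everything rests on the identity
     (a + b + s)^3 - a^3 - b^3 - s^3 = 3 (a + b) (b + s) (a + s).
   List the k_j as a, b, r, ... by decreasing absolute value, so that
   |a| = k_max. If |s| <= |a|/4 and the integers a + b, b + s are nonzero,
   then |a + s| >= 3|a|/4 and |a + b| + |b + s| >= |a - s| >= 3|a|/4 with
   both terms at least 1, so the product is at least |a|^2/4.
   For n = 2 take s = 0. For n = 3 take s the smallest entry: either a
   pairwise sum vanishes, and then k is the remaining entry, or |s| is a fixed
   fraction of |k|, or |s| <= |a|/4. For n >= 4 take s = r + t, where t is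
   the sum of the entries after the third: H_n is the product above plus
   s^3 - r^3 - sum_{j > 3} k_j^3, an error of size O(n^3 k_max3^2 k_max4).
   With c = 1/(100 n^3), unless (C) or (D) holds, |s| <= |a|/4 and the error
   is at most a small multiple of |a|^2. *)

Section RealDomain.
Variable R : realDomainType.

Lemma cube_sum3E (a b s : R) :
  (a + b + s) ^+ 3 - a ^+ 3 - b ^+ 3 - s ^+ 3 = 3 * ((a + b) * (b + s) * (a + s)).
Proof. by ring. Qed.

Lemma pair_sums_prod_ge (a b s : R) :
  4 * `|s| <= `|a| -> 1 <= `|a + b| -> 1 <= `|b + s| ->
  `|a| ^+ 2 <= 4 * `|(a + b) * (b + s) * (a + s)|.
Proof.
move=> s_small ab_ge1 bs_ge1.
have as_ge : 3 * `|a| <= 4 * `|a + s|.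
  by have := lerB_normD a s; lra.
have sum_ge : 3 * `|a| <= 4 * (`|a + b| + `|b + s|).
  have := ler_normB (a + b) (b + s).
  rewrite (_ : a + b - (b + s) = a - s); last by ring.
  by have := lerB_normD a (- s); rewrite normrN; lra.
have prod_ge : 3 * `|a| <= 8 * (`|a + b| * `|b + s|).
  have : 0 <= (`|a + b| - 1) * (`|b + s| - 1) by rewrite mulr_ge0 // subr_ge0.
  nra.
have a3_ge : 0 <= 3 * `|a| by rewrite mulr_ge0.
have := ler_pM a3_ge a3_ge prod_ge as_ge.
rewrite !normrM !expr2.
have := mulr_ge0 (mulr_ge0 (normr_ge0 (a + b)) (normr_ge0 (b + s))) (normr_ge0 (a + s)).
lra.
Qed.

Lemma norm_cube_sub_le (x y B : R) :
  `|x| <= B -> `|y| <= B -> `|x ^+ 3 - y ^+ 3| <= 3 * `|x - y| * B ^+ 2.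
Proof.
move=> xB yB.
have -> : x ^+ 3 - y ^+ 3 = (x - y) * (x ^+ 2 + x * y + y ^+ 2) by ring.
rewrite normrM [3 * _]mulrC -mulrA ler_wpM2l //.
have := ler_normD (x ^+ 2 + x * y) (y ^+ 2); have := ler_normD (x ^+ 2) (x * y).
rewrite !normrM.
have := ler_pM (normr_ge0 x) (normr_ge0 y) xB yB.
have := ler_pM (normr_ge0 x) (normr_ge0 x) xB xB.
have := ler_pM (normr_ge0 y) (normr_ge0 y) yB yB.
rewrite !expr2; lra.
Qed.

Lemma norm_sum_le_size (T : eqType) (l : seq T) (F : T -> R) (B : R) :
  (forall x, x \in l -> `|F x| <= B) -> `|\sum_(x <- l) F x| <= (size l)%:R * B.
Proof.
elim: l => [|y l IHl] FB; first by rewrite big_nil normr0 mul0r.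
rewrite big_cons /= -add1n natrD mulrDl mul1r.
apply: le_trans (ler_normD _ _) _; apply: lerD; first by apply: FB; rewrite mem_head.
by apply: IHl => x lx; apply: FB; rewrite in_cons lx orbT.
Qed.

End RealDomain.

Lemma normz_ge1 (x : int) : x != 0 -> 1 <= `|x|.
Proof. by rewrite -gtz0_ge1 normr_gt0. Qed.

Lemma cube_defect2_ge (C a b : int) : 2 <= C -> b != 0 -> a + b != 0 ->
  `|a| ^+ 2 <= C * `|(a + b) ^+ 3 - a ^+ 3 - b ^+ 3|.
Proof.
move=> C_ge2 b_nz ab_nz.
have prod_ge : `|a| ^+ 2 <= 4 * `|(a + b) * (b + 0) * (a + 0)|.
  by apply: pair_sums_prod_ge; rewrite ?normr0 ?mulr0 ?addr0 ?normz_ge1.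
rewrite !addr0 in prod_ge.
have -> : (a + b) ^+ 3 - a ^+ 3 - b ^+ 3 = 3 * ((a + b) * b * a) by ring.
rewrite [`|3 * _|]normrM normr_nat.
have := normr_ge0 ((a + b) * b * a); nra.
Qed.

Lemma cube_defect3_cases (C a b d : int) : 12 <= C -> `|b| <= `|a| -> `|d| <= `|a| ->
  [\/ (a + b) * (b + d) * (a + d) = 0, `|a + b + d| <= C * `|d|
    | `|a| ^+ 2 <= C * `|(a + b + d) ^+ 3 - a ^+ 3 - b ^+ 3 - d ^+ 3|].
Proof.
move=> C_ge12 ba da.
have [|] := eqVneq ((a + b) * (b + d) * (a + d)) 0; first exact: Or31.
rewrite !mulf_eq0 !negb_or => /andP[/andP[/normz_ge1 ab_ge1 /normz_ge1 bd_ge1] _].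
have [sum_small|sum_big] := leP `|a + b + d| (C * `|d|); first exact: Or32.
apply: Or33.
have d_small : 4 * `|d| <= `|a|.
  have := ler_normD (a + b) d; have := ler_normD a b.
  have := normr_ge0 d; nra.
have := pair_sums_prod_ge d_small ab_ge1 bd_ge1.
rewrite cube_sum3E [`|3 * _|]normrM normr_nat.
have := normr_ge0 ((a + b) * (b + d) * (a + d)); nra.
Qed.

Lemma cube_defect_tail_cases (N C a b r t X m : int) :
  1 <= N -> 100 * N ^+ 3 <= C -> 1 <= m -> m <= `|r| ->
  `|t| <= N * m -> `|X| <= N * (m * `|r| ^+ 2) ->
  [\/ b + r + t = 0, `|a + b + r + t| <= C * `|r|, `|a| ^+ 2 <= C * (`|r| ^+ 2 * m)
    | `|a| ^+ 2 <= C * `|(a + b + r + t) ^+ 3 - a ^+ 3 - b ^+ 3 - r ^+ 3 - X|].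
Proof.
move=> N_ge1 C_ge m_ge1 m_le t_le X_le.
have [|/normz_ge1 bs_ge1] := eqVneq (b + r + t) 0; first exact: Or41.
have [sum_small|sum_big] := leP `|a + b + r + t| (C * `|r|); first exact: Or42.
have [W_big|W_small] := leP (`|a| ^+ 2) (C * (`|r| ^+ 2 * m)); first exact: Or43.
apply: Or44; set H := _ - X; set W := `|r| ^+ 2 * m in W_small *.
have W_ge0 : 0 <= W by rewrite mulr_ge0 ?sqr_ge0 //; lra.
have N_ge0 : 0 <= N by lra.
have N_le2 : N <= N ^+ 2 by rewrite expr2 ler_peMl.
have N2_le3 : N ^+ 2 <= N ^+ 3 by rewrite exprS ler_peMl ?sqr_ge0.
have N3W_small : 100 * (N ^+ 3 * W) < `|a| ^+ 2.
  by rewrite mulrA; apply: le_lt_trans W_small; rewrite ler_wpM2r.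
have s_le : `|r + t| <= 2 * N * `|r|.
  by have := ler_normD r t; have := ler_wpM2l N_ge0 m_le; nra.
have s_small : 4 * `|r + t| <= `|a|.
  have r2_le : `|r| ^+ 2 <= W by rewrite ler_peMr ?sqr_ge0.
  have : (8 * N * `|r|) ^+ 2 < `|a| ^+ 2.
    have := ler_pM (sqr_ge0 N) (sqr_ge0 `|r|) N2_le3 r2_le.
    by rewrite !exprMn; nra.
  have Nr_ge0 : 0 <= 8 * N * `|r| by rewrite !mulr_ge0.
  by rewrite ltr_pXn2r ?nnegrE //; lra.
have ab_ge1 : 1 <= `|a + b|.
  apply: normz_ge1; apply: contraTneq sum_big => ab0.
  rewrite -addrA ab0 add0r -leNgt; apply: le_trans s_le _.
  by rewrite ler_wpM2r //; nra.
rewrite -addrA in bs_ge1.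
have prod_ge := pair_sums_prod_ge s_small ab_ge1 bs_ge1.
have err_le : `|(r + t) ^+ 3 - r ^+ 3 - X| <= 13 * (N ^+ 3 * W).
  have r_le : `|r| <= 2 * N * `|r| by nra.
  have := norm_cube_sub_le s_le r_le; rewrite [r + t - r]addrC addKr => cube_le.
  have := ler_wpM2r (sqr_ge0 (N * `|r|)) t_le.
  have := ler_wpM2r W_ge0 (le_trans N_le2 N2_le3).
  have := ler_normB ((r + t) ^+ 3 - r ^+ 3) X.
  rewrite /W; nra.
have H_ge : 3 * `|(a + b) * (b + (r + t)) * (a + (r + t))|
    - `|(r + t) ^+ 3 - r ^+ 3 - X| <= `|H|.
  have -> : H = 3 * ((a + b) * (b + (r + t)) * (a + (r + t)))
      + ((r + t) ^+ 3 - r ^+ 3 - X) by rewrite /H; ring.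
  by apply: le_trans _ (lerB_normD _ _); rewrite [`|3 * _|]normrM normr_nat.
have C_ge2 : 2 <= C by have := exprn_ege1 3 N_ge1; nra.
have a2_le : `|a| ^+ 2 <= 2 * `|H| by have := sqr_ge0 `|a|; lra.
exact: le_trans a2_le (ler_wpM2r (normr_ge0 H) C_ge2).
Qed.

Lemma natr_absz_le_scaled (R : numFieldType) (C x y : int) :
  0 < C -> `|x| <= C * `|y| -> (C%:~R)^-1 * (absz x)%:R <= (absz y)%:R :> R.
Proof. by move=> C_gt0 le_xy; rewrite ler_pdivrMl ?ltr0z // !natr_absz -rmorphM ler_int. Qed.

Definition abs_geq : rel int := fun x y => `|y| <= `|x|.

Lemma abs_geq_trans : transitive abs_geq.
Proof. by move=> y x z xy yz; apply: le_trans yz xy. Qed.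

Lemma abs_geq_path_le (x : int) (s : seq int) :
  path abs_geq x s -> forall y, y \in s -> `|y| <= `|x|.
Proof. by move/(order_path_min abs_geq_trans)/allP. Qed.

Lemma bigmax_absz_sorted (s : seq int) :
  sorted abs_geq s -> (\max_(x <- s) absz x)%N = absz (head 0 s).
Proof.
case: s => [|a s] /=; first by rewrite big_nil.
move/abs_geq_path_le => le_a; rewrite big_cons; apply/maxn_idPl/bigmax_leqP_seq => x xs _.
by rewrite -lez_nat !abszE le_a.
Qed.

Section Proposition2.
Variables (n : nat) (k : 'I_n -> int).

Let entries := sort abs_geq [seq k j | j <- enum 'I_n].

Lemma sorted_entries : sorted abs_geq entries.
Proof. by apply: sort_sorted => x y; apply: le_total. Qed.

Lemma size_entries : size entries = n.
Proof. by rewrite size_sort size_map size_enum_ord. Qed.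

Lemma mem_entries j : k j \in entries.
Proof. by rewrite mem_sort map_f ?mem_enum. Qed.

Lemma entriesP x : x \in entries -> exists j, k j = x.
Proof. by rewrite mem_sort => /mapP[j _ ->]; exists j. Qed.

Lemma big_entries (T : Type) (idx : T) (op : Monoid.com_law idx) (F : int -> T) :
  \big[op/idx]_(j < n) F (k j) = \big[op/idx]_(x <- entries) F x.
Proof. by rewrite (perm_big _ (permEl (perm_sort _ _))) big_map big_enum. Qed.

Lemma ksum_entries : ksum k = \sum_(x <- entries) x.
Proof. exact: big_entries. Qed.

Lemma Hn_entries : Hn k = (\sum_(x <- entries) x) ^+ 3 - \sum_(x <- entries) x ^+ 3.
Proof. by rewrite /Hn ksum_entries (big_entries _ (fun x => x ^+ 3)). Qed.

Lemma kmax_entries : kmax k = absz (head 0 entries).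
Proof. by rewrite /kmax (big_entries _ absz) bigmax_absz_sorted ?sorted_entries. Qed.

Lemma kmaxj_entries m : kmaxj k m = nth 0%N [seq absz x | x <- entries] m.-1.
Proof. by rewrite /kmaxj (map_comp absz k) sort_map. Qed.

Variable R : realFieldType.
Hypotheses (k_nz : forall j, k j != 0) (ksum_nz : ksum k != 0).

Let C : int := 100 * n%:Z ^+ 3.
Let c : R := (C%:~R)^-1.

Let C_ge100 : (0 < n)%N -> 100 <= C.
Proof. by move=> n_gt0; rewrite ler_peMr // exprn_ege1 // lez_nat. Qed.

Lemma entries_nz x : x \in entries -> x != 0.
Proof. by case/entriesP=> j <-. Qed.

Lemma proposition2_two : n = 2%N -> c * (kmax k)%:R ^+ 2 <= (absz (Hn k))%:R.
Proof.
move=> n2; rewrite kmax_entries Hn_entries.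
move: size_entries entries_nz ksum_nz; rewrite ksum_entries.
case: entries => [|a [|b [|? ?]]] //= size_s s_nz; rewrite ?n2 // in size_s.
rewrite !big_cons !big_nil !addr0 opprD addrA => ab_nz.
have C_ge : 100 <= C by rewrite C_ge100 ?n2.
rewrite -natrX -abszX; apply: natr_absz_le_scaled; first by lra.
rewrite normrX; apply: cube_defect2_ge ab_nz; first by lra.
by rewrite s_nz // !inE eqxx orbT.
Qed.

Lemma proposition2_three : n = 3%N ->
  c * (kmax k)%:R ^+ 2 <= (absz (Hn k))%:R \/
  (exists j0, k j0 = ksum k) \/
  (forall j, c * (absz (ksum k))%:R <= (absz (k j))%:R).
Proof.
move=> n3; have C_ge : 100 <= C by rewrite C_ge100 ?n3.
rewrite kmax_entries Hn_entries ksum_entries.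
move: size_entries sorted_entries entriesP mem_entries.
case: entries => [|a [|b [|d [|? ?]]]] //= size_s; rewrite ?n3 // in size_s.
move=> /and3P[ba db _] memP kmem; rewrite !big_cons !big_nil !addr0 !opprD !addrA.
have C_ge12 : 12 <= C by lra.
have [|sum_small|defect_big] := cube_defect3_cases C_ge12 ba (le_trans db ba).
- move/eqP; rewrite !mulf_eq0 => /orP[/orP[]|] /eqP sum0; right; left.
  + have /memP[j kj] : d \in [:: a; b; d] by rewrite !inE eqxx !orbT.
    by exists j; rewrite kj sum0 add0r.
  + have /memP[j kj] : a \in [:: a; b; d] by rewrite !inE eqxx.
    by exists j; rewrite kj -addrA sum0 addr0.
  + have /memP[j kj] : b \in [:: a; b; d] by rewrite !inE eqxx orbT.
    by exists j; rewrite kj addrAC sum0 add0r.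
- right; right => j; apply: natr_absz_le_scaled; first by lra.
  apply: (le_trans sum_small); apply: ler_wpM2l; first by lra.
  by have := kmem j; rewrite !inE => /or3P[] /eqP ->; rewrite ?(le_trans db ba).
- left; rewrite -natrX -abszX; apply: natr_absz_le_scaled; first by lra.
  by rewrite normrX.
Qed.

Lemma proposition2_ge4 : (4 <= n)%N ->
  c * (kmax k)%:R ^+ 2 <= (absz (Hn k))%:R \/
  (exists j0, k j0 = ksum k) \/
  c * (absz (ksum k))%:R <= (kmaxj k 3)%:R \/
  c * (kmax k)%:R ^+ 2 <= ((kmaxj k 3) ^ 2 * kmaxj k 4)%N%:R.
Proof.
move=> n_ge4; have C_ge : 100 <= C by rewrite C_ge100 // (leq_trans _ n_ge4).
rewrite kmax_entries Hn_entries ksum_entries !kmaxj_entries.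
move: size_entries sorted_entries entriesP entries_nz.
case: entries => [|a [|b [|r [|u tl]]]] //= size_s; rewrite -?size_s // in n_ge4.
move=> /and4P[_ _ ur /abs_geq_path_le tl_le] memP s_nz.
have tail_le x : x \in u :: tl -> `|x| <= `|u|.
  by rewrite inE => /predU1P[-> // | /tl_le].
have size_tail : (size (u :: tl))%:R <= n%:Z by rewrite natz lez_nat -size_s /=; lia.
have t_le := le_trans (norm_sum_le_size tail_le) (ler_wpM2r (normr_ge0 u) size_tail).
have cube_le x : x \in u :: tl -> `|x ^+ 3| <= `|u| * `|r| ^+ 2.
  move=> /tail_le xu; rewrite normrX exprS !expr2.
  by apply: ler_pM; rewrite ?mulr_ge0 //; apply: ler_pM; rewrite // (le_trans xu ur).
have X_le := le_trans (norm_sum_le_size cube_le)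
  (ler_wpM2r (mulr_ge0 (normr_ge0 u) (sqr_ge0 `|r|)) size_tail).
rewrite !big_cons in t_le X_le *.
set t := u + _ in t_le *; set X := u ^+ 3 + _ in X_le *; clearbody t X.
rewrite !opprD !addrA.
have N_ge1 : 1 <= n%:Z by rewrite -size_s.
have u_ge1 : 1 <= `|u| by rewrite normz_ge1 // s_nz // !inE eqxx !orbT.
have [sum0|sum_small|W_big|defect_big] :=
  cube_defect_tail_cases a b N_ge1 (lexx C) u_ge1 ur t_le X_le.
- right; left; have /memP[j kj] : a \in [:: a, b, r, u & tl] by rewrite inE eqxx.
  by exists j; rewrite kj -(addrA a) -(addrA a) sum0 addr0.
- by right; right; left; apply: natr_absz_le_scaled; first by lra.
- right; right; right; rewrite -natrX -abszX -abszX -abszM.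
  by apply: natr_absz_le_scaled; rewrite ?normrM ?normrX //; lra.
- left; rewrite -natrX -abszX; apply: natr_absz_le_scaled; first by lra.
  by rewrite normrX.
Qed.

End Proposition2.

Theorem proposition2 (R : realType) (n : nat) (hn : (2 <= n)%N) :
  exists c : R, 0 < c /\
  forall k : 'I_n -> int,
    (forall j, k j != 0) -> ksum k != 0 ->
    (n = 2%N -> (absz (Hn k))%:R >= c * (kmax k)%:R ^+ 2) /\
    (n = 3%N ->
       (absz (Hn k))%:R >= c * (kmax k)%:R ^+ 2 \/
       (exists j0 : 'I_n, k j0 = ksum k) \/
       (forall j : 'I_n, (absz (k j))%:R >= c * (absz (ksum k))%:R)) /\
    ((4 <= n)%N ->
       (absz (Hn k))%:R >= c * (kmax k)%:R ^+ 2 \/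
       (exists j0 : 'I_n, k j0 = ksum k) \/
       (kmaxj k 3)%:R >= c * (absz (ksum k))%:R \/
       ((kmaxj k 3) ^ 2 * kmaxj k 4)%N%:R >= c * (kmax k)%:R ^+ 2).
Proof.
exists ((100 * n%:Z ^+ 3)%:~R)^-1; split.
  by rewrite invr_gt0 ltr0z pmulr_rgt0 // exprn_gt0 // ltz_nat (ltn_trans _ hn).
move=> k k_nz ksum_nz; split; [|split].
- exact: proposition2_two.
- exact: proposition2_three.
- exact: proposition2_ge4.
Qed.
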